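(* Let $0\le\alpha<\beta$ with $\alpha+\beta<2$, and set $c_1=\alpha+\beta$, $c_2=\beta-\alpha$. Define $\tilde\Phi:\mathbb{R}^2\to\mathbb{R}$ by \[ \tilde\Phi(x,y)=\tfrac14c_1x^2+\tfrac14c_2y^2-\tfrac12\log\cosh\!\Big(\tfrac{c_1x+c_2y}{2}\Big)-\tfrac12\log\cosh\!\Big(\tfrac{c_1x-c_2y}{2}\Big). \] Then $(0,0)$ is the unique critical point of $\tilde\Phi$, and for every $r>0$, $\inf_{(x,y)\notin B(0,r)}\tilde\Phi(x,y)>0$, where $B(0,r)$ is the open Euclidean ball of radius $r$ about the origin. *)

From Stdlib Require Import Reals.
Open Scope R_scope.

Definition Phi (alpha beta x y : R) : R :=
  let c1 := alpha + beta in
  let c2 := beta - alpha in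
  / 4 * c1 * x ^ 2 + / 4 * c2 * y ^ 2
  - / 2 * ln (cosh ((c1 * x + c2 * y) / 2))
  - / 2 * ln (cosh ((c1 * x - c2 * y) / 2)).

(* (x,y) is a critical point: both partial derivatives exist and vanish
   (Phi is smooth, so this is the usual notion). *)
Definition critical_point (f : R -> R -> R) (x y : R) : Prop :=
  derivable_pt_lim (fun t => f t y) x 0 /\ derivable_pt_lim (fun t => f x t) y 0.

(* With u = (c1 x + c2 y)/2 and v = (c1 x - c2 y)/2, the partial derivatives of
   Phi vanish exactly when tanh u = x + y and tanh v = x - y.  Since u and v are
   the combinations (beta A + alpha B)/2 and (alpha A + beta B)/2 of A = x + y and
   B = x - y, and |tanh s| <= |s|, adding the two equations gives
   |A| + |B| <= (alpha + beta)/2 (|A| + |B|), which forces A = B = 0 because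
   alpha + beta < 2.  For the lower bound, ln cosh t <= t^2/2 yields
   Phi x y >= c1 (2 - c1) x^2 / 8 + c2 (2 - c2) y^2 / 8. *)
From Stdlib Require Import Reals Lra Psatz.
From Coquelicot Require Import Coquelicot.
Open Scope R_scope.

Lemma cosh_pos t : 0 < cosh t.
Proof. unfold cosh; pose proof (exp_pos t); pose proof (exp_pos (- t)); lra. Qed.

Lemma cosh_opp t : cosh (- t) = cosh t.
Proof. unfold cosh; rewrite Ropp_involutive; lra. Qed.

Lemma sinh_opp t : sinh (- t) = - sinh t.
Proof. unfold sinh; rewrite Ropp_involutive; lra. Qed.

Lemma tanh_opp t : tanh (- t) = - tanh t.
Proof. unfold tanh; rewrite cosh_opp, sinh_opp; field; apply Rgt_not_eq, cosh_pos. Qed.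

Lemma tanh_0 : tanh 0 = 0.
Proof. unfold tanh; rewrite sinh_0, cosh_0; field. Qed.

Lemma sinh_nonneg t : 0 <= t -> 0 <= sinh t.
Proof.
  intros [Ht | <-]; [| rewrite sinh_0; lra].
  rewrite <- sinh_0; left; now apply sinh_lt.
Qed.

(* t cosh t - sinh t vanishes at 0 and has derivative t sinh t >= 0. *)
Lemma sinh_le_mul_cosh t : 0 <= t -> sinh t <= t * cosh t.
Proof.
  intros [Ht | <-]; [| rewrite sinh_0; lra].
  destruct (MVT_cor2 (fun s => s * cosh s - sinh s) (fun s => s * sinh s) 0 t Ht)
    as [c [Hc Hct]].
  { intros c _; apply is_derive_Reals; unfold cosh, sinh; auto_derive; auto.
    cbv beta; field. }
  rewrite sinh_0 in Hc.
  assert (0 <= c * sinh c) by (apply Rmult_le_pos; [| apply sinh_nonneg]; lra).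
  nra.
Qed.

Lemma tanh_bounds t : 0 <= t -> 0 <= tanh t <= t.
Proof.
  intros Ht; pose proof (cosh_pos t); unfold tanh; split.
  - apply Rdiv_le_0_compat; [apply sinh_nonneg |]; lra.
  - apply Rmult_le_reg_r with (cosh t); [lra |].
    field_simplify; [rewrite Rmult_comm; apply sinh_le_mul_cosh |]; lra.
Qed.

Lemma Rabs_tanh_le t : Rabs (tanh t) <= Rabs t.
Proof.
  destruct (Rle_or_lt 0 t) as [Ht | Ht].
  - pose proof (tanh_bounds t Ht); rewrite !Rabs_pos_eq; lra.
  - pose proof (tanh_bounds (- t) ltac:(lra)) as Hb; rewrite tanh_opp in Hb.
    rewrite (Rabs_left t), Rabs_left1; lra.
Qed.

(* t^2/2 - ln cosh t vanishes at 0 and has derivative t - tanh t >= 0 for t >= 0;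
   negative t reduce to |t| by parity. *)
Lemma ln_cosh_le t : ln (cosh t) <= t ^ 2 / 2.
Proof.
  assert (Hpos : forall s, 0 < s -> ln (cosh s) <= s ^ 2 / 2).
  { intros s Hs.
    destruct (MVT_cor2 (fun t => t ^ 2 / 2 - ln (cosh t)) (fun t => t - tanh t) 0 s Hs)
      as [c [Hc Hcs]].
    { intros c _; pose proof (cosh_pos c) as Hcosh.
      apply is_derive_Reals; unfold tanh; auto_derive; [lra | field; lra]. }
    rewrite cosh_0, ln_1 in Hc.
    pose proof (tanh_bounds c ltac:(lra)); nra. }
  rewrite <- pow2_abs; destruct (Rtotal_order t 0) as [Ht | [-> | Ht]].
  - rewrite Rabs_left, <- cosh_opp by lra; apply Hpos; lra.
  - rewrite cosh_0, ln_1, Rabs_R0; lra.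
  - rewrite Rabs_pos_eq by lra; now apply Hpos.
Qed.

Lemma Rabs_half_comb_le p q A B : 0 <= p -> 0 <= q ->
  Rabs ((p * A + q * B) / 2) <= (p * Rabs A + q * Rabs B) / 2.
Proof.
  intros Hp Hq; unfold Rdiv; rewrite Rabs_mult, (Rabs_pos_eq (/ 2)) by lra.
  apply Rmult_le_compat_r; [lra |].
  eapply Rle_trans; [apply Rabs_triang |].
  rewrite !Rabs_mult, (Rabs_pos_eq p), (Rabs_pos_eq q) by lra; lra.
Qed.

(* The system is a contraction in the l1 norm of (A, B) with ratio (a + b)/2. *)
Lemma tanh_coupled_fixed_point a b A B : 0 <= a -> 0 <= b -> a + b < 2 ->
  tanh ((b * A + a * B) / 2) = A -> tanh ((a * A + b * B) / 2) = B ->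
  A = 0 /\ B = 0.
Proof.
  intros Ha Hb Hab EA EB.
  assert (LA : Rabs A <= (b * Rabs A + a * Rabs B) / 2).
  { rewrite <- EA at 1; eapply Rle_trans; [apply Rabs_tanh_le | now apply Rabs_half_comb_le]. }
  assert (LB : Rabs B <= (a * Rabs A + b * Rabs B) / 2).
  { rewrite <- EB at 1; eapply Rle_trans; [apply Rabs_tanh_le | now apply Rabs_half_comb_le]. }
  pose proof (Rabs_pos A); pose proof (Rabs_pos B).
  assert (Rabs A + Rabs B <= 0) by nra.
  split; apply Rabs_eq_0; lra.
Qed.

Lemma Phi_derive_x a b x y : derivable_pt_lim (fun t => Phi a b t y) x
  ((a + b) / 4 * (2 * x - tanh (((a + b) * x + (b - a) * y) / 2)
                         - tanh (((a + b) * x - (b - a) * y) / 2))).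
Proof.
  apply is_derive_Reals; unfold Phi, tanh, Rdiv, Rminus; auto_derive.
  - repeat split; apply cosh_pos.
  - field; split; apply Rgt_not_eq, cosh_pos.
Qed.

Lemma Phi_derive_y a b x y : derivable_pt_lim (fun t => Phi a b x t) y
  ((b - a) / 4 * (2 * y - tanh (((a + b) * x + (b - a) * y) / 2)
                         + tanh (((a + b) * x - (b - a) * y) / 2))).
Proof.
  apply is_derive_Reals; unfold Phi, tanh, Rdiv, Rminus; auto_derive.
  - repeat split; apply cosh_pos.
  - field; split; apply Rgt_not_eq, cosh_pos.
Qed.

Lemma critical_point_Phi_iff a b x y : 0 < a + b -> 0 < b - a ->
  critical_point (Phi a b) x y <->
  tanh ((b * (x + y) + a * (x - y)) / 2) = x + y /\
  tanh ((a * (x + y) + b * (x - y)) / 2) = x - y.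
Proof.
  intros Hc1 Hc2.
  replace ((b * (x + y) + a * (x - y)) / 2) with (((a + b) * x + (b - a) * y) / 2) by field.
  replace ((a * (x + y) + b * (x - y)) / 2) with (((a + b) * x - (b - a) * y) / 2) by field.
  pose proof (Phi_derive_x a b x y) as Dx; pose proof (Phi_derive_y a b x y) as Dy.
  split.
  - intros [Hx Hy].
    pose proof (uniqueness_limite _ _ _ _ Hx Dx) as Ex.
    pose proof (uniqueness_limite _ _ _ _ Hy Dy) as Ey.
    symmetry in Ex, Ey; apply Rmult_integral in Ex, Ey.
    destruct Ex, Ey; lra.
  - intros [Eu Ev]; rewrite Eu, Ev in Dx, Dy; split.
    + now replace 0 with ((a + b) / 4 * (2 * x - (x + y) - (x - y))) by ring.
    + now replace 0 with ((b - a) / 4 * (2 * y - (x + y) + (x - y))) by ring.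
Qed.

Lemma Phi_ge_quadratic a b x y :
  (a + b) * (2 - (a + b)) / 8 * x ^ 2 + (b - a) * (2 - (b - a)) / 8 * y ^ 2
  <= Phi a b x y.
Proof.
  pose proof (ln_cosh_le (((a + b) * x + (b - a) * y) / 2)).
  pose proof (ln_cosh_le (((a + b) * x - (b - a) * y) / 2)).
  unfold Phi; lra.
Qed.

Lemma Phi_coercive a b : 0 <= a -> a < b -> a + b < 2 ->
  exists k, 0 < k /\ forall x y, k * (x ^ 2 + y ^ 2) <= Phi a b x y.
Proof.
  intros Ha Hab Hab2.
  exists (Rmin ((a + b) * (2 - (a + b))) ((b - a) * (2 - (b - a))) / 8); split.
  - apply Rdiv_lt_0_compat; [apply Rmin_glb_lt |]; nra.
  - intros x y; pose proof (Phi_ge_quadratic a b x y).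
    pose proof (Rmin_l ((a + b) * (2 - (a + b))) ((b - a) * (2 - (b - a)))).
    pose proof (Rmin_r ((a + b) * (2 - (a + b))) ((b - a) * (2 - (b - a)))).
    nra.
Qed.

Theorem mainTheorem6 (alpha beta : R)
  (h0 : 0 <= alpha) (hab : alpha < beta) (h2 : alpha + beta < 2) :
  (forall x y : R, critical_point (Phi alpha beta) x y <-> (x = 0 /\ y = 0)) /\
  (forall r : R, 0 < r ->
     exists m : R, 0 < m /\
       forall x y : R, r <= sqrt (x ^ 2 + y ^ 2) -> m <= Phi alpha beta x y).
Proof.
  split.
  - intros x y; rewrite critical_point_Phi_iff by lra; split.
    + intros [EA EB].
      destruct (tanh_coupled_fixed_point alpha beta (x + y) (x - y)) as [A0 B0];
        auto; lra.
    + intros [-> ->]; split;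
        replace (_ / 2) with 0 by field; rewrite tanh_0; ring.
  - intros r Hr.
    destruct (Phi_coercive alpha beta) as [k [Hk HPhi]]; auto.
    exists (k * r ^ 2); split; [apply Rmult_lt_0_compat; [| apply pow_lt]; lra |].
    intros x y Hxy.
    assert (Hr2 : r ^ 2 <= x ^ 2 + y ^ 2).
    { rewrite <- (pow2_sqrt (x ^ 2 + y ^ 2)) by nra; apply pow_incr; lra. }
    specialize (HPhi x y); nra.
Qed.
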